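(* Let $\eta:\mathbb{R}\to\mathbb{R}$ be defined by $\eta(x)=\frac32(1-|x|)^2$ for $|x|\le 1$ and $\eta(x)=0$ for $|x|>1$, so that $\hat\eta(k)=\frac{6}{k^3}(k-\sin k)$ for $k\neq 0$ and $\hat\eta(0)=1$. Then for all $k\in\mathbb{R}$, $$\frac{1}{1+\beta k^2}\le \hat\eta(k)\le \frac{1}{1+\alpha k^2},\qquad \alpha=\tfrac{1}{20},\ \beta=\tfrac{7}{40}.$$
   Context: The Fourier transform is $\hat f(k)=\int_{\mathbb{R}} e^{-ikx}f(x)\,\mathrm{d}x$. *)

From Stdlib Require Import Reals.
From Coquelicot Require Import Coquelicot.
Open Scope R_scope.

Definition expi (t : R) : C := (cos t, sin t).

(* Fourier transform convention: hat f(k) = \int_R e^{-ikx} f(x) dx.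
   [is_fourier f k v] : the improper integral over R converges to v. *)
Definition is_fourier (f : R -> R) (k : R) (v : C) : Prop :=
  is_RInt_gen (fun x => Cmult (expi (- (k * x))) (RtoC (f x)))
    (Rbar_locally m_infty) (Rbar_locally p_infty) v.

Definition eta (x : R) : R :=
  if Rle_dec (Rabs x) 1 then 3 / 2 * (1 - Rabs x) ^ 2 else 0.

From Stdlib Require Import Reals Lra Psatz.
From Coquelicot Require Import Coquelicot.
Open Scope R_scope.

Lemma nonneg_of_deriv_nonneg (f df : R -> R) :
  (forall x, is_derive f x (df x)) -> (forall x, 0 <= x -> 0 <= df x) ->
  f 0 = 0 -> forall x, 0 <= x -> 0 <= f x.
Proof.
  intros Hd Hdf H0 x Hx.
  destruct (MVT_gen f 0 x df) as [c [Hc Hfc]].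
  - intros y _; apply Hd.
  - intros y _. apply continuity_pt_filterlim.
    apply (ex_derive_continuous (K := R_AbsRing) (V := R_NormedModule)).
    eexists; apply Hd.
  - rewrite Rmin_left in Hc by lra. rewrite Rmax_right in Hc by lra.
    assert (0 <= df c) by (apply Hdf; lra).
    rewrite H0 in Hfc. nra.
Qed.

(* Each of the following bounds is the integral of the previous one. *)
Lemma sin_le_id x : 0 <= x -> 0 <= x - sin x.
Proof.
  revert x. apply (nonneg_of_deriv_nonneg _ (fun x => 1 - cos x)).
  - intros y. auto_derive; auto. ring.
  - intros y _. pose proof (COS_bound y); lra.
  - rewrite sin_0; ring.
Qed.

Lemma cos_ge_taylor2 x : 0 <= x -> 0 <= cos x - (1 - x^2/2).
Proof.
  revert x. apply (nonneg_of_deriv_nonneg _ (fun x => x - sin x)).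
  - intros y. auto_derive; auto. field.
  - exact sin_le_id.
  - rewrite cos_0; field.
Qed.

Lemma sin_ge_taylor3 x : 0 <= x -> 0 <= sin x - (x - x^3/6).
Proof.
  revert x. apply (nonneg_of_deriv_nonneg _ (fun x => cos x - (1 - x^2/2))).
  - intros y. auto_derive; auto. field.
  - exact cos_ge_taylor2.
  - rewrite sin_0; field.
Qed.

Lemma cos_le_taylor4 x : 0 <= x -> 0 <= (1 - x^2/2 + x^4/24) - cos x.
Proof.
  revert x. apply (nonneg_of_deriv_nonneg _ (fun x => sin x - (x - x^3/6))).
  - intros y. auto_derive; auto. field.
  - exact sin_ge_taylor3.
  - rewrite cos_0; field.
Qed.

Lemma sin_le_taylor5 x : 0 <= x -> 0 <= (x - x^3/6 + x^5/120) - sin x.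
Proof.
  revert x.
  apply (nonneg_of_deriv_nonneg _ (fun x => (1 - x^2/2 + x^4/24) - cos x)).
  - intros y. auto_derive; auto. field.
  - exact cos_le_taylor4.
  - rewrite sin_0; field.
Qed.

Lemma cos_ge_taylor6 x : 0 <= x ->
  0 <= cos x - (1 - x^2/2 + x^4/24 - x^6/720).
Proof.
  revert x.
  apply (nonneg_of_deriv_nonneg _ (fun x => (x - x^3/6 + x^5/120) - sin x)).
  - intros y. auto_derive; auto. field.
  - exact sin_le_taylor5.
  - rewrite cos_0; field.
Qed.

Lemma sin_ge_taylor7 x : 0 <= x ->
  0 <= sin x - (x - x^3/6 + x^5/120 - x^7/5040).
Proof.
  revert x.
  apply (nonneg_of_deriv_nonneg _
           (fun x => cos x - (1 - x^2/2 + x^4/24 - x^6/720))).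
  - intros y. auto_derive; auto. field.
  - exact cos_ge_taylor6.
  - rewrite sin_0; field.
Qed.

Lemma cos_le_taylor8 x : 0 <= x ->
  0 <= (1 - x^2/2 + x^4/24 - x^6/720 + x^8/40320) - cos x.
Proof.
  revert x.
  apply (nonneg_of_deriv_nonneg _
           (fun x => sin x - (x - x^3/6 + x^5/120 - x^7/5040))).
  - intros y. auto_derive; auto. field.
  - exact sin_ge_taylor7.
  - rewrite cos_0; field.
Qed.

(* cos is nonnegative on [0, PI/2] but negative at 1.575 by the degree-8
   bound, so PI/2 < 1.575. *)
Lemma PI_lt_315 : PI < 3.15.
Proof.
  destruct (Rlt_or_le PI 3.15) as [h | h]; [exact h |].
  pose proof (cos_le_taylor8 1.575 ltac:(lra)).
  pose proof (cos_ge_0 1.575 ltac:(pose proof PI_RGT_0; lra) ltac:(lra)).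
  lra.
Qed.

(* On [8.2, 11.6] sin stays below 0.97: writing k = 3 PI - w, either w is
   small (w <= 1.25) and sin k = sin w is controlled by the degree-5 bound,
   or w < 0 and sin k <= 0. *)
Lemma sin_le_097 k : 8.2 <= k <= 11.6 -> sin k <= 0.97.
Proof.
  intros Hk.
  assert (Hsym : sin k = sin (3 * PI - k)).
  { replace (3 * PI - k) with (PI - (k - 2 * PI)) by ring.
    rewrite sin_PI_x, <- (sin_period (k - 2 * PI) 1). f_equal. simpl. ring. }
  rewrite Hsym. pose proof PI_lt_315. pose proof PI2_3_2.
  set (w := 3 * PI - k).
  destruct (Rle_or_lt 0 w) as [hw | hw].
  - pose proof (sin_le_taylor5 w hw).
    assert (w <= 1.25) by (unfold w; lra).
    assert (Hw3 : 0 <= w^3) by (apply pow_le; lra).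
    assert (w^5 <= 1.5625 * w^3).
    { replace (w^5) with (w^3 * w^2) by ring. rewrite (Rmult_comm 1.5625).
      apply Rmult_le_compat_l; nra. }
    assert (0 <= (1.25 - w) * (1 - 0.154 * (1.5625 + 1.25 * w + w^2))).
    { apply Rmult_le_pos; nra. }
    nra.
  - replace w with (- (k - 3 * PI)) by (unfold w; ring). rewrite sin_neg.
    assert (0 <= sin (k - 3 * PI)) by (apply sin_ge_0; unfold w in hw; lra). lra.
Qed.

(* The upper bound, cross-multiplied, with s standing for sin k. *)
Lemma upper_bound_poly k s : 0 < k -> -1 <= s ->
  (k <= 3.6 -> k - k^3/6 + k^5/120 - k^7/5040 <= s) ->
  6 * (k - s) * (20 + k^2) <= 20 * k^3.
Proof.
  intros Hk Hs Htaylor.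
  destruct (Rle_or_lt k 3.6) as [h | h].
  - specialize (Htaylor h).
    assert (E : 20 * k^3 - 6 * (k - (k - k^3/6 + k^5/120 - k^7/5040)) * (20 + k^2)
                = k^7 * (22 - k^2) / 840) by field.
    assert (0 <= k^7 * (22 - k^2)) by (apply Rmult_le_pos; [apply pow_le |]; nra).
    nra.
  - assert (0 <= 7 * k^3 - 3 * k^2 - 60 * k - 60) by nra.
    nra.
Qed.

(* The lower bound, cross-multiplied, with s standing for sin k. *)
Lemma lower_bound_poly k s : 0 < k -> s <= 1 ->
  (k <= 3.7 -> s <= k - k^3/6 + k^5/120) ->
  (8.2 <= k <= 11.6 -> s <= 0.97) ->
  40 * k^3 <= 6 * (k - s) * (40 + 7 * k^2).
Proof.
  intros Hk Hs Htaylor Hmid.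
  assert (0 < 40 + 7 * k^2) by nra.
  destruct (Rle_or_lt k 3.7) as [h1 | h1]; [| destruct (Rle_or_lt k 8.2) as [h2 | h2]].
  - specialize (Htaylor h1).
    assert (E : 6 * (k - (k - k^3/6 + k^5/120)) * (40 + 7 * k^2) - 40 * k^3
                = k^5 * (100 - 7 * k^2) / 20) by field.
    assert (0 <= k^5 * (100 - 7 * k^2)) by (apply Rmult_le_pos; [apply pow_le |]; nra).
    nra.
  - (* s <= 1 suffices: the cubic k^3 - 21 k^2 + 120 k - 120 is >= 0 here *)
    assert (0 <= (8.2 - k) * -(k^2 - 12.8 * k + 15.04)) by (apply Rmult_le_pos; nra).
    nra.
  - destruct (Rle_or_lt k 11.6) as [h3 | h3].
    + specialize (Hmid (conj (Rlt_le _ _ h2) h3)).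
      assert (0 <= (k - 9.26)^2 * (2 * k - 3.7))
        by (apply Rmult_le_pos; [apply pow2_ge_0 | lra]).
      nra.
    + assert (0 <= (k - 11.6) * (k^2 - 9.4 * k + 10.96)) by (apply Rmult_le_pos; nra).
      nra.
Qed.

Lemma Rdiv_le_cross a b c d : 0 < b -> 0 < d -> a * d <= c * b -> a / b <= c / d.
Proof.
  intros hb hd h.
  replace (a / b) with ((a * d) * / (b * d)) by (field; lra).
  replace (c / d) with ((c * b) * / (b * d)) by (field; lra).
  apply Rmult_le_compat_r; [left; apply Rinv_0_lt_compat; nra | exact h].
Qed.

Lemma lorentzian_bounds_pos k : 0 < k ->
  1 / (1 + 7/40 * k^2) <= 6 / k^3 * (k - sin k) /\
  6 / k^3 * (k - sin k) <= 1 / (1 + 1/20 * k^2).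
Proof.
  intros hk.
  assert (0 < k^3) by (apply pow_lt; lra).
  replace (6 / k^3 * (k - sin k)) with (6 * (k - sin k) / k^3) by (field; lra).
  pose proof (SIN_bound k).
  split.
  - replace (1 / (1 + 7/40 * k^2)) with (40 / (40 + 7 * k^2)) by (field; nra).
    apply Rdiv_le_cross; [nra | lra |].
    pose proof (lower_bound_poly k (sin k) hk ltac:(lra)
      (fun _ => ltac:(pose proof (sin_le_taylor5 k ltac:(lra)); lra))
      (sin_le_097 k)).
    nra.
  - replace (1 / (1 + 1/20 * k^2)) with (20 / (20 + k^2)) by (field; nra).
    apply Rdiv_le_cross; [lra | nra |].
    pose proof (upper_bound_poly k (sin k) hk ltac:(lra)
      (fun _ => ltac:(pose proof (sin_ge_taylor7 k ltac:(lra)); lra))).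
    nra.
Qed.

(* Both sides are even in k, so the bounds extend to all k <> 0. *)
Lemma lorentzian_bounds k : k <> 0 ->
  1 / (1 + 7/40 * k^2) <= 6 / k^3 * (k - sin k) /\
  6 / k^3 * (k - sin k) <= 1 / (1 + 1/20 * k^2).
Proof.
  intros hk. destruct (Rlt_or_le 0 k) as [h | h].
  - now apply lorentzian_bounds_pos.
  - pose proof (lorentzian_bounds_pos (- k) ltac:(lra)) as H.
    replace (6 / (- k)^3 * (- k - sin (- k))) with (6 / k^3 * (k - sin k)) in H
      by (rewrite sin_neg; field; lra).
    replace ((- k)^2) with (k^2) in H by ring. exact H.
Qed.

Lemma is_RInt_vanishing {V : NormedModule R_AbsRing} (g : R -> V) a b :
  a <= b -> (forall x, a < x < b -> g x = zero) -> is_RInt g a b zero.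
Proof.
  intros hab hg.
  apply is_RInt_ext with (fun _ => zero).
  - intros x hx. rewrite Rmin_left, Rmax_right in hx by lra.
    symmetry; apply hg; exact hx.
  - pose proof (is_RInt_const a b (@zero V)) as H.
    rewrite (scal_zero_r (K := R_AbsRing) (V := V)) in H. exact H.
Qed.

Lemma is_RInt_gen_of_support {V : NormedModule R_AbsRing} (g : R -> V) a b l :
  a <= b -> (forall x, x < a \/ b < x -> g x = zero) ->
  is_RInt g a b l ->
  is_RInt_gen g (Rbar_locally m_infty) (Rbar_locally p_infty) l.
Proof.
  intros hab hsupp H P HP.
  apply (Filter_prod _ _ _ (fun u => u < a) (fun v => b < v));
    [exists a; auto | exists b; auto |].
  intros u v hu hv. exists l. split; [| exact (locally_singleton _ _ HP)].
  assert (Hl : is_RInt g u a zero)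
    by (apply is_RInt_vanishing; [lra | intros x hx; apply hsupp; lra]).
  assert (Hr : is_RInt g b v zero)
    by (apply is_RInt_vanishing; [lra | intros x hx; apply hsupp; lra]).
  pose proof (is_RInt_Chasles _ _ _ _ _ _ (is_RInt_Chasles _ _ _ _ _ _ Hl H) Hr)
    as Hall.
  rewrite plus_zero_l, plus_zero_r in Hall. exact Hall.
Qed.

Lemma is_RInt_antiderivative (F f : R -> R) a b l : a <= b ->
  (forall x, is_derive F x (f x)) -> (forall x, ex_derive f x) ->
  F b - F a = l -> is_RInt f a b l.
Proof.
  intros hab hF hf <-.
  apply (is_RInt_derive (V := R_CompleteNormedModule)).
  - intros x _; apply hF.
  - intros x _. apply (ex_derive_continuous (K := R_AbsRing) (V := R_NormedModule)).
    apply hf.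
Qed.

Lemma is_RInt_glue (g gl gr : R -> R) a c b ll lr : a <= c <= b ->
  (forall x, a <= x <= c -> g x = gl x) -> (forall x, c <= x <= b -> g x = gr x) ->
  is_RInt gl a c ll -> is_RInt gr c b lr -> is_RInt g a b (ll + lr).
Proof.
  intros hacb hl hr Hl Hr.
  apply (is_RInt_Chasles g a c b ll lr).
  - apply is_RInt_ext with gl; [| exact Hl].
    intros x hx. rewrite Rmin_left, Rmax_right in hx by lra.
    symmetry; apply hl; lra.
  - apply is_RInt_ext with gr; [| exact Hr].
    intros x hx. rewrite Rmin_left, Rmax_right in hx by lra.
    symmetry; apply hr; lra.
Qed.

Lemma eta_outside x : x < -1 \/ 1 < x -> eta x = 0.
Proof.
  intros h. unfold eta. destruct (Rle_dec (Rabs x) 1) as [h' | _]; [| reflexivity].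
  exfalso. apply Rabs_le_between in h'. lra.
Qed.

Lemma eta_right x : 0 <= x <= 1 -> eta x = 3/2 * (1 - x)^2.
Proof.
  intros h. unfold eta. rewrite Rabs_right by lra.
  destruct (Rle_dec x 1); [reflexivity | lra].
Qed.

Lemma eta_left x : -1 <= x <= 0 -> eta x = 3/2 * (1 + x)^2.
Proof.
  intros h. unfold eta. rewrite Rabs_left1 by lra.
  destruct (Rle_dec (- x) 1); [f_equal; ring | lra].
Qed.

Definition eta_integrand (k x : R) : C := Cmult (expi (- (k * x))) (RtoC (eta x)).

Lemma Re_eta_integrand k x : fst (eta_integrand k x) = eta x * cos (k * x).
Proof. unfold eta_integrand, Cmult, expi, RtoC; simpl. rewrite cos_neg. ring. Qed.

Lemma Im_eta_integrand k x : snd (eta_integrand k x) = - eta x * sin (k * x).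
Proof. unfold eta_integrand, Cmult, expi, RtoC; simpl. rewrite sin_neg. ring. Qed.

Lemma is_fourier_eta_of_parts k u :
  is_RInt (fun x => fst (eta_integrand k x)) (-1) 1 u ->
  is_RInt (fun x => snd (eta_integrand k x)) (-1) 1 0 ->
  is_fourier eta k (RtoC u).
Proof.
  intros Hre Him.
  apply (is_RInt_gen_of_support (eta_integrand k) (-1) 1); [lra | |].
  - intros x hx. unfold eta_integrand. rewrite eta_outside by exact hx.
    unfold Cmult, RtoC; apply injective_projections; simpl; unfold zero; simpl; ring.
  - exact (is_RInt_fct_extend_pair _ _ _ _ _ Hre Him).
Qed.

Lemma Re_integral k : k <> 0 ->
  is_RInt (fun x => fst (eta_integrand k x)) (-1) 1 (6 / k^3 * (k - sin k)).
Proof.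
  intros hk.
  replace (6 / k^3 * (k - sin k))
    with (3 / k^3 * (k - sin k) + 3 / k^3 * (k - sin k)) by (field; exact hk).
  apply (is_RInt_glue _ (fun x => 3/2 * (1 + x)^2 * cos (k * x))
                        (fun x => 3/2 * (1 - x)^2 * cos (k * x)) (-1) 0 1); [lra | | | |].
  - intros x h. rewrite Re_eta_integrand, eta_left by exact h. ring.
  - intros x h. rewrite Re_eta_integrand, eta_right by exact h. ring.
  - apply (is_RInt_antiderivative
      (fun x => 3/2 * ((1 + x)^2 * sin (k * x) / k + 2 * (1 + x) * cos (k * x) / k^2
                       - 2 * sin (k * x) / k^3))); [lra | | |].
    + intros x. auto_derive; auto. field; auto.
    + intros x. auto_derive; auto.
    + replace (k * -1) with (- k) by ring.
      rewrite Rmult_0_r, sin_neg, cos_neg, sin_0, cos_0. field; auto.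
  - apply (is_RInt_antiderivative
      (fun x => 3/2 * ((1 - x)^2 * sin (k * x) / k - 2 * (1 - x) * cos (k * x) / k^2
                       - 2 * sin (k * x) / k^3))); [lra | | |].
    + intros x. auto_derive; auto. field; auto.
    + intros x. auto_derive; auto.
    + rewrite Rmult_0_r, Rmult_1_r, sin_0, cos_0. field; auto.
Qed.

(* The imaginary part vanishes: eta is even and sin is odd, and the two
   halves contribute opposite amounts -c and c. *)
Lemma Im_integral k : k <> 0 ->
  is_RInt (fun x => snd (eta_integrand k x)) (-1) 1 0.
Proof.
  intros hk.
  set (c := 3/2 * (- 1 / k + 2 / k^3 - 2 * cos k / k^3)).
  replace 0 with (- c + c) by ring.
  apply (is_RInt_glue _ (fun x => -3/2 * (1 + x)^2 * sin (k * x))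
                        (fun x => -3/2 * (1 - x)^2 * sin (k * x)) (-1) 0 1); [lra | | | |].
  - intros x h. rewrite Im_eta_integrand, eta_left by exact h. field.
  - intros x h. rewrite Im_eta_integrand, eta_right by exact h. field.
  - apply (is_RInt_antiderivative
      (fun x => -3/2 * (- (1 + x)^2 * cos (k * x) / k + 2 * (1 + x) * sin (k * x) / k^2
                        + 2 * cos (k * x) / k^3))); [lra | | |].
    + intros x. auto_derive; auto. field; auto.
    + intros x. auto_derive; auto.
    + unfold c. replace (k * -1) with (- k) by ring.
      rewrite Rmult_0_r, sin_neg, cos_neg, sin_0, cos_0. field; auto.
  - apply (is_RInt_antiderivative
      (fun x => -3/2 * (- (1 - x)^2 * cos (k * x) / k - 2 * (1 - x) * sin (k * x) / k^2
                        + 2 * cos (k * x) / k^3))); [lra | | |].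
    + intros x. auto_derive; auto. field; auto.
    + intros x. auto_derive; auto.
    + unfold c. rewrite Rmult_0_r, Rmult_1_r, sin_0, cos_0. field; auto.
Qed.

Lemma Re_integral_0 : is_RInt (fun x => fst (eta_integrand 0 x)) (-1) 1 1.
Proof.
  enough (H : is_RInt (fun x => fst (eta_integrand 0 x)) (-1) 1 (/2 + /2))
    by (replace (/2 + /2) with 1 in H by field; exact H).
  apply (is_RInt_glue _ (fun x => 3/2 * (1 + x)^2) (fun x => 3/2 * (1 - x)^2) (-1) 0 1);
    [lra | | | |].
  - intros x h. rewrite Re_eta_integrand, eta_left, Rmult_0_l, cos_0 by exact h. ring.
  - intros x h. rewrite Re_eta_integrand, eta_right, Rmult_0_l, cos_0 by exact h. ring.
  - apply (is_RInt_antiderivative (fun x => /2 * (1 + x)^3)); [lra | | | field].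
    + intros x. auto_derive; auto. field.
    + intros x. auto_derive; auto.
  - apply (is_RInt_antiderivative (fun x => - /2 * (1 - x)^3)); [lra | | | field].
    + intros x. auto_derive; auto. field.
    + intros x. auto_derive; auto.
Qed.

Lemma Im_integral_0 : is_RInt (fun x => snd (eta_integrand 0 x)) (-1) 1 0.
Proof.
  apply (is_RInt_vanishing (V := R_NormedModule)); [lra |].
  intros x _. rewrite Im_eta_integrand, Rmult_0_l, sin_0. apply Rmult_0_r.
Qed.

Theorem mainTheorem2 :
  forall k : R,
    exists v : R,
      is_fourier eta k (RtoC v) /\
      v = (if Req_EM_T k 0 then 1 else 6 / k ^ 3 * (k - sin k)) /\
      1 / (1 + 7 / 40 * k ^ 2) <= v /\ v <= 1 / (1 + 1 / 20 * k ^ 2).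
Proof.
  intros k. exists (if Req_EM_T k 0 then 1 else 6 / k ^ 3 * (k - sin k)).
  destruct (Req_EM_T k 0) as [-> | hk]; (split; [| split; [reflexivity |]]).
  - exact (is_fourier_eta_of_parts 0 1 Re_integral_0 Im_integral_0).
  - replace (1 / (1 + 7 / 40 * 0 ^ 2)) with 1 by field.
    replace (1 / (1 + 1 / 20 * 0 ^ 2)) with 1 by field. lra.
  - exact (is_fourier_eta_of_parts k _ (Re_integral k hk) (Im_integral k hk)).
  - exact (lorentzian_bounds k hk).
Qed.
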